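(* Let $A$ and $B$ be quantum Latin squares of order $n$ with entries $\ket{A_{ij}},\ket{B_{ij}}$. If the linear map $$P:=\sum_{i=0}^{n-1}\sum_{j=0}^{n-1}\sum_{k=0}^{n-1}\langle k|B_{ij}\rangle\,(\ket i\otimes\ket j)(\bra{A_{ij}}\otimes\bra k)$$ on $\mathbb C^n\otimes\mathbb C^n$ is a permutation of basis states (maps $\{\ket p\otimes\ket q\}_{p,q}$ bijectively onto itself), then $A$ and $B$ are Latin squares.
   Context: $\{\ket k\}_{k=0}^{n-1}$ is the computational basis of $\mathbb C^n$. A quantum Latin square of order $n$ is an $n\times n$ array of vectors of $\mathbb C^n$ in which every row and every column is an orthonormal basis; the entry in column $i$, row $j$ is $\ket{A_{ij}}$. A Latin square is a quantum Latin square all of whose entries are computational basis states. *)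

From HB Require Import structures.
From mathcomp Require Import all_boot all_order all_algebra all_fingroup all_field.
Set Implicit Arguments. Unset Strict Implicit. Unset Printing Implicit Defensive.
Import Order.TTheory GRing.Theory Num.Theory.
Local Open Scope ring_scope.

Definition ket (n : nat) (k : 'I_n) : 'cV[algC]_n := delta_mx k 0.

Definition braket (n : nat) (u v : 'cV[algC]_n) : algC :=
  \sum_(k < n) (u k 0)^* * v k 0.

(* f : 'I_n -> C^n is an orthonormal basis of C^n
   (n orthonormal vectors in the n-dimensional space C^n) *)
Definition orthonormal_basis (n : nat) (f : 'I_n -> 'cV[algC]_n) : Prop :=
  forall a b : 'I_n, braket (f a) (f b) = (a == b)%:R.

(* A i j = |A_ij>, the entry in column i, row j. *)
Definition quantum_latin_square (n : nat) (A : 'I_n -> 'I_n -> 'cV[algC]_n) : Prop :=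
  (forall j, orthonormal_basis (fun i => A i j)) /\
  (forall i, orthonormal_basis (fun j => A i j)).

(* entries are computational basis states (up to a global phase) *)
Definition latin_square (n : nat) (A : 'I_n -> 'I_n -> 'cV[algC]_n) : Prop :=
  quantum_latin_square A /\
  forall i j, exists (k : 'I_n) (c : algC), `|c| = 1 /\ A i j = c *: ket k.

(* Matrix entry <a1|<a2| P |x1>|x2> of
   P = sum_{i,j,k} <k|B_ij> (|i> (x) |j>)(<A_ij| (x) <k|)
   on C^n (x) C^n, whose basis |p>(x)|q> is indexed by pairs (p,q). *)
Definition Pop (n : nat) (A B : 'I_n -> 'I_n -> 'cV[algC]_n)
    (a x : 'I_n * 'I_n) : algC :=
  \sum_(i < n) \sum_(j < n) \sum_(k < n)
    braket (ket k) (B i j) * ((ket i) a.1 0 * (ket j) a.2 0)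
    * (braket (A i j) (ket x.1) * braket (ket k) (ket x.2)).

Definition permutes_basis (n : nat) (P : 'I_n * 'I_n -> 'I_n * 'I_n -> algC) : Prop :=
  exists s : {perm 'I_n * 'I_n}, forall a x, P a x = (a == s x)%:R.

From mathcomp Require Import all_boot all_order all_algebra all_fingroup all_field.

Set Implicit Arguments.
Unset Strict Implicit.
Unset Printing Implicit Defensive.

Import Order.TTheory GRing.Theory Num.Theory.
Local Open Scope ring_scope.

(* In the computational basis the matrix entry of P at row (i, j) and column
   (p, q) is B_ij(q) * conj (A_ij(p)).  If P is a permutation matrix, row (i, j)
   is an indicator vector, so the product f(q) g(p) of two functions vanishes
   except at one pair; hence each factor is supported on a single point, i.e.
   A_ij and B_ij are unit vectors proportional to basis states. *)

Lemma ketE n (k l : 'I_n) (m : 'I_1) : ket k l m = (k == l)%:R.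
Proof. by rewrite (ord1 m) /ket mxE eqxx andbT eq_sym. Qed.

Lemma braket_ketl n (k : 'I_n) v : braket (ket k) v = v k 0.
Proof.
rewrite /braket (bigD1 k) //= big1 ?addr0 => [|l /negbTE nlk].
  by rewrite ketE eqxx conjC1 mul1r.
by rewrite ketE eq_sym nlk conjC0 mul0r.
Qed.

Lemma braket_ketr n (k : 'I_n) u : braket u (ket k) = (u k 0)^*.
Proof.
rewrite /braket (bigD1 k) //= big1 ?addr0 => [|l /negbTE nlk].
  by rewrite ketE eqxx mulr1.
by rewrite ketE eq_sym nlk mulr0.
Qed.

Lemma PopE n (A B : 'I_n -> 'I_n -> 'cV[algC]_n) a x :
  Pop A B a x = B a.1 a.2 x.2 0 * (A a.1 a.2 x.1 0)^*.
Proof.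
rewrite /Pop (bigD1 a.1) //= [X in _ + X]big1 ?addr0 => [|i /negbTE nia];
  last first.
  by apply: big1 => j _; apply: big1 => k _; rewrite ketE nia mul0r mulr0 mul0r.
rewrite (bigD1 a.2) //= [X in _ + X]big1 ?addr0 => [|j /negbTE nja]; last first.
  by apply: big1 => k _; rewrite (ketE j) nja !mulr0 mul0r.
rewrite (bigD1 x.2) //= [X in _ + X]big1 ?addr0 => [|k nkx]; last first.
  by rewrite [braket _ (ket x.2)]braket_ketl (ketE x.2) eq_sym (negbTE nkx)
    !mulr0.
by rewrite !braket_ketl braket_ketr !ketE !eqxx !mulr1.
Qed.

Lemma mul_eq_indicator (R : idomainType) (I J : eqType) (f : I -> R) (g : J -> R)
    (i0 : I) (j0 : J) :
  (forall i j, f i * g j = ((i == i0) && (j == j0))%:R) ->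
  (forall i, i != i0 -> f i = 0) /\ (forall j, j != j0 -> g j = 0).
Proof.
move=> fg; have fg0 : f i0 * g j0 != 0 by rewrite fg !eqxx oner_neq0.
have [fi0 gj0] : f i0 != 0 /\ g j0 != 0.
  by apply/andP; move: fg0; rewrite mulf_eq0 negb_or.
split=> [i nii0 | j njj0]; apply/eqP.
- by have /eqP := fg i j0; rewrite (negbTE nii0) mulf_eq0 (negbTE gj0) orbF.
- by have /eqP := fg i0 j; rewrite (negbTE njj0) andbF mulf_eq0 (negbTE fi0).
Qed.

Lemma supported_unit_vector n (v : 'cV[algC]_n) (x : 'I_n) :
  (forall y, y != x -> v y 0 = 0) -> braket v v = 1 ->
  exists (k : 'I_n) (c : algC), `|c| = 1 /\ v = c *: ket k.
Proof.
move=> vx v1; exists x, (v x 0); split.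
  move: v1; rewrite /braket (bigD1 x) //= big1 ?addr0 => [vx1|y nyx]; last first.
    by rewrite vx // mulr0.
  by apply/eqP; rewrite -sqrp_eq1 // normCK mulrC vx1.
apply/matrixP => y m; rewrite (ord1 m) !mxE eqxx andbT.
by case: (eqVneq x y) => [<-|nxy]; rewrite ?mulr1 // mulr0 vx // eq_sym.
Qed.

Lemma qls_braket_diag n (A : 'I_n -> 'I_n -> 'cV[algC]_n) i j :
  quantum_latin_square A -> braket (A i j) (A i j) = 1.
Proof. by case=> _ /(_ i j j); rewrite eqxx. Qed.

Lemma permutes_basis_supports n (A B : 'I_n -> 'I_n -> 'cV[algC]_n) i j :
  permutes_basis (Pop A B) ->
  exists p q, (forall p', p' != p -> A i j p' 0 = 0) /\
              (forall q', q' != q -> B i j q' 0 = 0).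
Proof.
case=> s Ps; pose x := (s^-1)%g (i, j); exists x.1, x.2.
have Pij q p : B i j q 0 * (A i j p 0)^* = ((q == x.2) && (p == x.1))%:R.
  have := Ps (i, j) (p, q); rewrite PopE /= => ->.
  by rewrite eq_sym (canF_eq (permK s)) -/x [x]surjective_pairing xpair_eqE andbC.
have [Bq Ap] := mul_eq_indicator Pij.
by split=> // p' /Ap /eqP; rewrite conjC_eq0 => /eqP.
Qed.

Theorem lemma17 (n : nat) (A B : 'I_n -> 'I_n -> 'cV[algC]_n) :
  quantum_latin_square A -> quantum_latin_square B ->
  permutes_basis (Pop A B) ->
  latin_square A /\ latin_square B.
Proof.
move=> qA qB PAB; split; split=> // i j;
  have [p [q [Ap Bq]]] := permutes_basis_supports i j PAB.
- exact: supported_unit_vector Ap (qls_braket_diag i j qA).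
- exact: supported_unit_vector Bq (qls_braket_diag i j qB).
Qed.
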